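(* In the setting described in the context (training data $(x^{(k)},\alpha^{(k)})_{1\le k\le N}$ with the associated set functions $e$ and $f$): (1) for all $A,B$ with $\emptyset\neq A\subseteq B\subseteq\mathcal C$, $e(A)\le e(B)$; (2) for all $A,B$ with $A\subseteq B\subsetneq\mathcal C$, $f(A)\le f(B)$.
   Context: Let $\mathcal C=\{1,\dots,n\}$ and let $L$ be either a finite totally ordered set $0=\xi_1<\dots<\xi_l=1$ or $L=[0,1]$. Training data: $N$ pairs $(x^{(k)},\alpha^{(k)})$, $k=1,\dots,N$, with $x^{(k)}=(x^{(k)}_1,\dots,x^{(k)}_n)\in L^n$ and $\alpha^{(k)}\in L$. For nonempty $A\subseteq\mathcal C$ put $m_{k,A}=\min_{i\in A}x^{(k)}_i$; for $A\subsetneq\mathcal C$ put $\gamma_{k,A}=\max_{i\in\mathcal C\setminus A}x^{(k)}_i$. The Gödel implication is $a\to_G b=1$ if $a\le b$ and $a\to_G b=b$ otherwise; the epsilon product is $a\,\epsilon\, b=b$ if $a<b$ and $a\,\epsilon\, b=0$ if $a\ge b$. Define $e(A)=\min_{1\le k\le N}(m_{k,A}\to_G\alpha^{(k)})$ for nonempty $A\subseteq\mathcal C$, and $f(B)=\max_{1\le k\le N}(\gamma_{k,B}\,\epsilon\,\alpha^{(k)})$ for $B\subsetneq\mathcal C$. *)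

From mathcomp Require Import all_boot all_order.
Set Implicit Arguments. Unset Strict Implicit. Unset Printing Implicit Defensive.
Import Order.TTheory.
Local Open Scope order_scope.

(* L is modelled as an arbitrary bounded totally ordered type (0 = \bot,
   1 = \top); this covers both a finite chain 0 = xi_1 < ... < xi_l = 1
   and the real interval [0,1].  Criteria C = 'I_n, data indices 'I_N. *)

Section Defs.
Context {disp : Order.disp_t} {L : tbOrderType disp}.

Definition godel_impl (a b : L) : L := if a <= b then \top else b.
Definition eps_prod (a b : L) : L := if a < b then b else \bot.

Context {n N : nat} (x : 'I_N -> 'I_n -> L) (alpha : 'I_N -> L).

Definition m_kA (k : 'I_N) (A : {set 'I_n}) : L := \meet_(i in A) x k i.
Definition gamma_kA (k : 'I_N) (A : {set 'I_n}) : L := \join_(i in ~: A) x k i.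

Definition e_fun (A : {set 'I_n}) : L :=
  \meet_(k < N) godel_impl (m_kA k A) (alpha k).
Definition f_fun (B : {set 'I_n}) : L :=
  \join_(k < N) eps_prod (gamma_kA k B) (alpha k).
End Defs.

From mathcomp Require Import all_boot all_order.
Import Order.TTheory.
Local Open Scope order_scope.

(* Enlarging a set of criteria can only lower the minimum m_{k,A} and lower
   the maximum gamma_{k,A} taken over its complement; both the Goedel
   implication and the epsilon product are antitone in their first argument,
   and the outer min (resp. max) over the data preserves the order. *)

Section Monotonicity.
Context {disp : Order.disp_t} {L : tbOrderType disp}.

Lemma godel_impl_antitone {a a' b : L} :
  a <= a' -> godel_impl a' b <= godel_impl a b.
Proof.
move=> le_aa'; rewrite /godel_impl.
case: ifP => [le_a'b|_]; first by rewrite (le_trans le_aa' le_a'b).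
by case: ifP.
Qed.

Lemma eps_prod_antitone {a a' b : L} : a <= a' -> eps_prod a' b <= eps_prod a b.
Proof.
move=> le_aa'; rewrite /eps_prod.
case: ifP => [lt_a'b|_]; first by rewrite (le_lt_trans le_aa' lt_a'b).
exact: le0x.
Qed.

Context {n N : nat} {x : 'I_N -> 'I_n -> L} {alpha : 'I_N -> L}.

Lemma m_kA_subset (k : 'I_N) {A B : {set 'I_n}} :
  A \subset B -> m_kA x k B <= m_kA x k A.
Proof. exact: le_meets. Qed.

Lemma gamma_kA_subset (k : 'I_N) {A B : {set 'I_n}} :
  A \subset B -> gamma_kA x k B <= gamma_kA x k A.
Proof. by move=> sAB; apply: le_joins; rewrite setCS. Qed.

Lemma e_fun_subset (A B : {set 'I_n}) :
  A \subset B -> e_fun x alpha A <= e_fun x alpha B.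
Proof.
move=> sAB; apply/meetsP => k _.
apply: le_trans (godel_impl_antitone (m_kA_subset k sAB)).
exact: meets_inf.
Qed.

Lemma f_fun_subset (A B : {set 'I_n}) :
  A \subset B -> f_fun x alpha A <= f_fun x alpha B.
Proof.
move=> sAB; apply/joinsP => k _.
apply: le_trans (eps_prod_antitone (gamma_kA_subset k sAB)) _.
exact: joins_sup.
Qed.

End Monotonicity.

Theorem lemma2 (disp : Order.disp_t) (L : tbOrderType disp) (n N : nat)
  (x : 'I_N -> 'I_n -> L) (alpha : 'I_N -> L) :
  (forall A B : {set 'I_n}, A != set0 -> A \subset B ->
     e_fun x alpha A <= e_fun x alpha B) /\
  (forall A B : {set 'I_n}, A \subset B -> B \proper [set: 'I_n] ->
     f_fun x alpha A <= f_fun x alpha B).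
Proof.
split=> [A B _ | A B sAB _]; [exact: e_fun_subset | exact: f_fun_subset].
Qed.
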